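(* There is no algorithm simulating $f(p)=2p$ on $\mathcal{P}=(0,1/2)$. More precisely: let $R_0$ be a random variable with a fixed law (not depending on $p$), and for $p\in(0,1/2)$ let $\mathbb{P}_p$ be the law under which $X_1,X_2,\dots$ are i.i.d. Bernoulli$(p)$ and independent of $R_0$. Let $T$ be a random time, finite $\mathbb{P}_p$-a.s. for every $p$, such that $\{T\le n\}\in\sigma(X_1,\dots,X_n,R_0)$ for every $n$, and let $S=S(X_1,\dots,X_T,R_0)$ be a measurable function (not depending on $p$) with $S\in[0,1]$. Then it is impossible that $\mathbb{E}_pS=2p$ for all $p\in(0,1/2)$.
   Context: By Lemma 1 (an $s$-coin exists iff an unbiased $[0,1]$-valued estimator of $s$ exists), the nonexistence of such an estimator $S$ is equivalent to the nonexistence of an algorithm producing a $2p$-coin from i.i.d. $p$-coins and independent auxiliary randomness. *)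

From HB Require Import structures.
From mathcomp Require Import all_boot all_order all_algebra.
From mathcomp Require Import all_classical all_reals all_analysis.
Set Implicit Arguments. Unset Strict Implicit. Unset Printing Implicit Defensive.
Import Order.TTheory GRing.Theory Num.Theory.
Local Open Scope classical_set_scope.
Local Open Scope ring_scope.

(* The auxiliary randomness R_0 is the identity on a
   probability space (Om, mu) (mu = the fixed law of R_0, not depending on p).

   A random time T with {T <= n} in sigma(X_1..X_n, R_0) is described by the
   family of events  stop w  (w : seq bool, of length n):
      {T = n} = U_{|w| = n} {(X_1..X_n) = w} x {R_0 in B_w}
   i.e.  T = n  iff  r is in  stop w  for w = (X_1..X_n) and in no
   stop (take k w), k < n  (first entrance).  Every set of
   sigma(X_1..X_n,R_0) has this form, so this describes every such T. *)

Definition coin_weight {R : realType} (p : R) (w : seq bool) : R :=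
  \prod_(b <- w) (if b then p else 1 - p).

(* T = size w and (X_1..X_T) = w, given R_0 = r and the coins starting with w *)
Definition exit_at {d} {Om : measurableType d}
    (stop : seq bool -> set Om) (w : seq bool) (r : Om) : bool :=
  (r \in stop w) && all (fun k => r \notin stop (take k w)) (iota 0 (size w)).

Definition stop_prob {R : realType} {d} {Om : measurableType d}
    (mu : probability Om R) (stop : seq bool -> set Om) (p : R) : \bar R :=
  (\int[mu]_r (\sum_(0 <= n <oo)
     (\sum_(t : n.-tuple bool)
        (if exit_at stop t r then coin_weight p t else 0))%:E))%E.

(* E_p S(X_1..X_T, R_0)  (on the event T < oo, which has full probability) *)
Definition expect_S {R : realType} {d} {Om : measurableType d}
    (mu : probability Om R) (stop : seq bool -> set Om)
    (S : seq bool -> Om -> R) (p : R) : \bar R :=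
  (\int[mu]_r (\sum_(0 <= n <oo)
     (\sum_(t : n.-tuple bool)
        (if exit_at stop t r then coin_weight p t * S t r else 0))%:E))%E.

(** The probability of stopping splits as [E_p S] plus a "deficit" series
  [D(p) = sum_w P_p(first |w| coins are w) * E[(1 - S w) ; T = |w|]], so the
  two hypotheses force [D(p) = 1 - 2p] on (0, 1/2).  At [p = 1/4] this is
  nonzero, hence some finite word [w] has a positive deficit [a].  For [p] in
  [1/4, 1/2] the weight of [w] is at least [4^-|w|], so [D(p) >= 4^-|w| a > 0]
  stays bounded away from 0, while [1 - 2p] tends to 0 as [p -> 1/2]. *)
From HB Require Import structures.
From mathcomp Require Import all_boot all_order all_algebra.
From mathcomp Require Import all_classical all_reals all_analysis.
From mathcomp Require Import measurable_realfun lra.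
Import Order.TTheory GRing.Theory Num.Theory.
Local Open Scope classical_set_scope.
Local Open Scope ring_scope.

Lemma coin_weight_ge0 {R : realType} (p : R) (w : seq bool) :
  0 <= p <= 1 -> 0 <= coin_weight p w.
Proof.
case/andP=> p0 p1; apply: prodr_ge0 => -[] _ //.
by rewrite subr_ge0.
Qed.

Lemma coin_weight_ge_expn {R : realType} (m p : R) (w : seq bool) :
  0 <= m <= p -> m <= 1 - p -> m ^+ size w <= coin_weight p w.
Proof.
case/andP=> m0 mp m1p; elim: w => [|b w IH]; first by rewrite /coin_weight big_nil.
by rewrite /coin_weight big_cons exprS ler_pM ?exprn_ge0 //; case: b.
Qed.

Section ExitMeasurability.
Variables (d : measure_display) (Om : measurableType d).
Variable stop : seq bool -> set Om.
Hypothesis mstop : forall w, measurable (stop w).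

Lemma measurable_not_stopped (w : seq bool) (ks : seq nat) :
  measurable [set r | all (fun k => r \notin stop (take k w)) ks].
Proof.
elim: ks => [|k ks IH] /=.
  by rewrite (_ : [set _ | true] = setT) //; apply/seteqP; split.
rewrite (_ : [set _ | _] = ~` stop (take k w) `&`
    [set r | all (fun k => r \notin stop (take k w)) ks]).
  exact: measurableI (measurableC (mstop _)) IH.
apply/seteqP; split => r /=.
  by case/andP => /negP r_notin r_rest; split => // r_in; apply: r_notin; rewrite inE.
by case=> r_notin r_rest; apply/andP; split => //; apply/negP; rewrite inE.
Qed.

Lemma measurable_exit_at (w : seq bool) : measurable_fun setT (exit_at stop w).
Proof.
apply: (measurable_fun_bool true); rewrite setTI.
rewrite (_ : _ @^-1` _ = stop w `&`
    [set r | all (fun k => r \notin stop (take k w)) (iota 0 (size w))]).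
  exact: measurableI (mstop _) (measurable_not_stopped _ _).
apply/seteqP; split => r; rewrite /exit_at /=.
  by case/andP; rewrite inE.
by case=> r_in r_rest; apply/andP; split => //; rewrite inE.
Qed.

End ExitMeasurability.

Section Deficit.
Context {R : realType} {d : measure_display} {Om : measurableType d}.
Variables (mu : probability Om R) (stop : seq bool -> set Om).
Variable S : seq bool -> Om -> R.
Hypothesis mstop : forall w, measurable (stop w).
Hypothesis mS : forall w, measurable_fun setT (S w).
Hypothesis S01 : forall w r, 0 <= S w r <= 1.

Let exit_ind (w : seq bool) (f : Om -> R) (r : Om) : R :=
  if exit_at stop w r then f r else 0.

Let measurable_exit_ind w f : measurable_fun setT f ->
  measurable_fun setT (fun r => (exit_ind w f r)%:E : \bar R).
Proof.
move=> mf; apply/measurable_EFinP; rewrite /exit_ind.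
by apply: measurable_fun_ifT => //; exact: measurable_exit_at.
Qed.

Let measurable_one_minus_S w : measurable_fun setT (fun r => 1 - S w r).
Proof. by apply: measurable_funB => //; exact: measurable_cst. Qed.

Let one_minus_S_ge0 w r : 0 <= 1 - S w r.
Proof. by case/andP: (S01 w r) => _; rewrite subr_ge0. Qed.

Let exit_ind_ge0 w f r : (forall r, 0 <= f r) -> 0 <= exit_ind w f r.
Proof. by rewrite /exit_ind; case: ifP. Qed.

Let deficit_integral (w : seq bool) : \bar R :=
  (\int[mu]_r (exit_ind w (fun r => 1 - S w r) r)%:E)%E.

Let deficit_integral_ge0 w : (0 <= deficit_integral w)%E.
Proof. by apply: integral_ge0 => r _; rewrite lee_fin exit_ind_ge0. Qed.

Let deficit_integral_le1 w : (deficit_integral w <= 1)%E.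
Proof.
apply: le_trans (_ : \int[mu]_r (cst 1%:E) r <= 1)%E; last first.
  by rewrite integral_cst // mul1e probability_le1.
apply: ge0_le_integral => //.
- by move=> r _; rewrite lee_fin exit_ind_ge0.
- exact: measurable_exit_ind.
- move=> r _; rewrite lee_fin /exit_ind; case: ifP => // _.
  by case/andP: (S01 w r) => S0 _; rewrite lerBlDr lerDl.
Qed.

Definition stop_deficit (w : seq bool) : R := fine (deficit_integral w).

Let EFin_stop_deficit w : (stop_deficit w)%:E = deficit_integral w.
Proof.
by rewrite fineK // ge0_fin_numE // (le_lt_trans (deficit_integral_le1 w)) ?ltry.
Qed.

Lemma stop_deficit_ge0 w : 0 <= stop_deficit w.
Proof. by rewrite -lee_fin EFin_stop_deficit. Qed.

Lemma stop_deficit_le1 w : stop_deficit w <= 1.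
Proof. by rewrite -lee_fin EFin_stop_deficit. Qed.

Definition deficit_series (p : R) : \bar R :=
  (\sum_(n <oo) (\sum_(t : n.-tuple bool) coin_weight p t * stop_deficit t)%:E)%E.

Let integral_exit_deficit (p : R) (n : nat) : 0 <= p <= 1 ->
  (\int[mu]_r (\sum_(t : n.-tuple bool)
      exit_ind t (fun r => coin_weight p t * (1 - S t r)) r)%:E =
   (\sum_(t : n.-tuple bool) coin_weight p t * stop_deficit t)%:E)%E.
Proof.
move=> p01; have cw0 t : 0 <= coin_weight p t := coin_weight_ge0 p t p01.
under eq_integral do rewrite -sumEFin.
rewrite ge0_integral_sum //; last 2 first.
- by move=> t; apply/measurable_exit_ind/measurable_funM.
- by move=> t r _; rewrite lee_fin exit_ind_ge0 // => r'; rewrite mulr_ge0.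
rewrite -sumEFin; apply: eq_bigr => t _.
rewrite EFinM EFin_stop_deficit -ge0_integralZl //; last 3 first.
- exact/measurable_exit_ind/measurable_one_minus_S.
- by move=> r _; rewrite lee_fin exit_ind_ge0.
- by rewrite lee_fin.
by apply: eq_integral => r _; rewrite /exit_ind -EFinM; case: ifP; rewrite ?mulr0.
Qed.

Lemma stop_prob_split (p : R) : 0 <= p <= 1 ->
  stop_prob mu stop p = (expect_S mu stop S p + deficit_series p)%E.
Proof.
move=> p01; have cw0 t : 0 <= coin_weight p t := coin_weight_ge0 p t p01.
pose val n r := \sum_(t : n.-tuple bool) exit_ind t (fun r => coin_weight p t * S t r) r.
pose def n r := \sum_(t : n.-tuple bool) exit_ind t (fun r => coin_weight p t * (1 - S t r)) r.
have val_ge0 n r : 0 <= val n r.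
  by apply: sumr_ge0 => t _; apply: exit_ind_ge0 => r'; rewrite mulr_ge0 //; case/andP: (S01 t r').
have def_ge0 n r : 0 <= def n r.
  by apply: sumr_ge0 => t _; apply: exit_ind_ge0 => r'; rewrite mulr_ge0.
have mval n : measurable_fun setT (fun r => (val n r)%:E).
  apply/measurable_EFinP; apply: measurable_sum => t; apply/measurable_EFinP.
  exact/measurable_exit_ind/measurable_funM.
have mdef n : measurable_fun setT (fun r => (def n r)%:E).
  apply/measurable_EFinP; apply: measurable_sum => t; apply/measurable_EFinP.
  exact/measurable_exit_ind/measurable_funM.
have int_def n : (\int[mu]_r (def n r)%:E =
    (\sum_(t : n.-tuple bool) coin_weight p t * stop_deficit t)%:E)%E :=
  integral_exit_deficit p n p01.
have expectE : expect_S mu stop S p = (\sum_(n <oo) \int[mu]_r (val n r)%:E)%E.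
  by rewrite -integral_nneseries // => k r _; rewrite lee_fin.
have stopE : stop_prob mu stop p =
    (\sum_(n <oo) \int[mu]_r ((val n r)%:E + (def n r)%:E))%E.
  rewrite -integral_nneseries //; last 2 first.
  - by move=> k; apply: emeasurable_funD.
  - by move=> k r _; rewrite adde_ge0 // lee_fin.
  apply: eq_integral => r _; apply: eq_eseriesr => k _.
  rewrite -EFinD -big_split /=; congr EFin; apply: eq_bigr => t _.
  rewrite /exit_ind; case: ifP => _; last by rewrite addr0.
  by rewrite -mulrDr subrKC mulr1.
rewrite stopE expectE /deficit_series -nneseriesD; last 2 first.
- by move=> k _ _; apply: integral_ge0 => r _; rewrite lee_fin.
- by move=> k _ _; rewrite lee_fin sumr_ge0 // => t _; rewrite mulr_ge0 ?stop_deficit_ge0.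
apply: eq_eseriesr => k _.
by rewrite ge0_integralD ?int_def // => r _; rewrite lee_fin ?val_ge0 ?def_ge0.
Qed.

Lemma deficit_series_ge_term (p : R) (n : nat) (t0 : n.-tuple bool) :
  0 <= p <= 1 -> ((coin_weight p t0 * stop_deficit t0)%:E <= deficit_series p)%E.
Proof.
move=> p01.
have term_ge0 (t : seq bool) : 0 <= coin_weight p t * stop_deficit t.
  by rewrite mulr_ge0 ?coin_weight_ge0 ?stop_deficit_ge0.
have sum_ge0 k : (0 <= (\sum_(t : k.-tuple bool) coin_weight p t * stop_deficit t)%:E)%E.
  by rewrite lee_fin sumr_ge0.
apply: le_trans (nneseries_lim_ge n.+1 (fun k _ _ => sum_ge0 k)).
rewrite big_nat_recr //= lee_paddl ?sume_ge0 // => [k _|]; first exact: sum_ge0.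
by rewrite lee_fin (bigD1 t0) //= lerDl sumr_ge0.
Qed.

Lemma stop_deficit_witness (p : R) : deficit_series p != 0%E ->
  exists w : seq bool, 0 < stop_deficit w.
Proof.
move=> /eqP series_nz; apply/not_existsP => no_witness; apply: series_nz.
have deficit0 w : stop_deficit w = 0.
  by apply/eqP; rewrite eq_le stop_deficit_ge0 andbT leNgt; apply/negP/no_witness.
rewrite /deficit_series eseries0 // => n _ _.
by rewrite big1 // => t _; rewrite deficit0 mulr0.
Qed.

End Deficit.

Theorem corollary1 (R : realType) (d : measure_display) (Om : measurableType d)
    (mu : probability Om R) (stop : seq bool -> set Om)
    (S : seq bool -> Om -> R) :
  (forall w, measurable (stop w)) ->
  (forall w, measurable_fun setT (S w)) ->
  (forall w r, 0 <= S w r <= 1) ->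
  (forall p : R, 0 < p < 2^-1 -> stop_prob mu stop p = 1%E) ->
  ~ (forall p : R, 0 < p < 2^-1 -> expect_S mu stop S p = (2 * p)%:E).
Proof.
move=> mstop mS S01 stop_as unbiased.
have deficitE p : 0 < p < 2^-1 -> deficit_series mu stop S p = (1 - 2 * p)%:E.
  move=> p_in; have p01 : 0 <= p <= 1 by apply/andP; lra.
  move: (stop_prob_split mu stop S mstop mS S01 p p01).
  rewrite stop_as // unbiased //; case: deficit_series => //= x [] x_eq.
  by congr EFin; lra.
have [w aw_gt0] : exists w, 0 < stop_deficit mu stop S w.
  apply: (stop_deficit_witness mu stop S mstop mS S01 4^-1).
  by rewrite deficitE; [apply/eqP => -[]; lra | apply/andP; lra].
pose c := (4^-1) ^+ size w * stop_deficit mu stop S w.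
have c_gt0 : 0 < c by rewrite mulr_gt0 // exprn_gt0.
pose p := 2^-1 - c / 4.
have c_le1 : c <= 1.
  rewrite -[1]mulr1 ler_pM ?exprn_ge0 ?stop_deficit_ge0 ?stop_deficit_le1 //.
  by rewrite exprn_ile1 //; lra.
have p_in : 0 < p < 2^-1 by apply/andP; rewrite /p; lra.
have p01 : 0 <= p <= 1 by apply/andP; rewrite /p; lra.
have := deficit_series_ge_term mu stop S mstop mS S01 p _ (in_tuple w) p01.
rewrite deficitE // lee_fin /= => weight_le.
have : c <= coin_weight p w * stop_deficit mu stop S w.
  apply: ler_wpM2r; first exact: stop_deficit_ge0.
  by apply: coin_weight_ge_expn; rewrite /p; [apply/andP|]; lra.
move=> weight_ge; rewrite /p in weight_le; lra.
Qed.
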